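(* For every integer $N\ge4$, $$\frac{h_N'''(0)}{h_N(0)}-\frac{h_{N-1}'''(0)}{h_{N-1}(0)}-\frac32\left(\frac{h_N'(0)}{h_N(0)}\right)^2-\frac{21}{2}\left(\frac{h_{N-2}(0)}{h_{N-1}(0)}-\frac74\right)=0.$$
   Context: $h_N(z)={}_2F_1(-N+1,N;2N;1-z)=\sum_{r=1}^N H_N^{(r)}z^{r-1}$ with $H_N^{(r)}=\binom{N+r-2}{N-1}\binom{2N-1-r}{N-1}/\binom{3N-2}{N-1}$ (the ice-point boundary one-point generating function). *)

From HB Require Import structures.
From mathcomp Require Import all_boot all_order all_algebra.
Set Implicit Arguments. Unset Strict Implicit. Unset Printing Implicit Defensive.
Import Order.TTheory GRing.Theory Num.Theory.
Local Open Scope ring_scope.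

Definition Hcoef (N r : nat) : rat :=
  ('C(N + r - 2, N - 1) * 'C(2 * N - 1 - r, N - 1))%:R / ('C(3 * N - 2, N - 1))%:R.

Definition hpoly (N : nat) : {poly rat} := \poly_(i < N) Hcoef N i.+1.

From mathcomp Require Import all_boot all_order all_algebra.
From mathcomp Require Import ring lra zify.
Import GRing.Theory Num.Theory.
Local Open Scope ring_scope.

(* The coefficients H_N^(r) form a hypergeometric sequence in r,
   r (2N-1-r) H_N^(r+1) = (N+r-1)(N-r) H_N^(r), because each of the two
   binomials in the numerator moves by one step.  Hence h_N'(0)/h_N(0) = N/2 and
   h_N'''(0)/h_N(0) = N(N+1)(N+2)(N-3)/(4(2N-3)), while
   h_N(0) = (2N-2)!(2N-1)!/((N-1)!(3N-2)!) gives a rational ratio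
   h_{N-1}(0)/h_N(0).  The theorem becomes an identity of rational functions of N. *)

Lemma Hcoef_rec N r : (0 < N)%N -> (0 < r)%N ->
  (r * (2 * N - 1 - r))%:R * Hcoef N r.+1
  = ((N + r - 1) * (N - r))%:R * Hcoef N r.
Proof.
move=> N_gt0 r_gt0; rewrite /Hcoef !mulrA -!natrM; congr (_%:R / _).
have lower := mul_bin_down (N + r - 1) (N - 1).
have upper := mul_bin_down (2 * N - 1 - r) (N - 1).
rewrite (_ : N + r.+1 - 2 = N + r - 1)%N; last by lia.
rewrite (_ : 2 * N - 1 - r.+1 = (2 * N - 1 - r).-1)%N; last by lia.
rewrite (_ : (N + r - 1).-1 = N + r - 2)%N in lower; last by lia.
rewrite (_ : N + r - 1 - (N - 1) = r)%N in lower; last by lia.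
rewrite (_ : 2 * N - 1 - r - (N - 1) = N - r)%N in upper; last by lia.
by rewrite mulnACA -lower [in RHS]mulnACA upper.
Qed.

Lemma natr_fact_neq0 (R : numDomainType) n : n`!%:R != 0 :> R.
Proof. by rewrite pnatr_eq0 -lt0n fact_gt0. Qed.

Lemma natr_bin (R : numFieldType) n k : (k <= n)%N ->
  'C(n, k)%:R = n`!%:R / (k`!%:R * (n - k)`!%:R) :> R.
Proof.
move=> le_kn; rewrite -(bin_fact le_kn) -[_ * (n - k)`!%:R]natrM natrM mulfK //.
by rewrite natrM mulf_neq0 ?natr_fact_neq0.
Qed.

Lemma Hcoef1E n : Hcoef n.+1 1 =
  (n.*2)`!%:R * (n.*2.+1)`!%:R / (n`!%:R * (3 * n).+1`!%:R).
Proof.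
rewrite /Hcoef (_ : n.+1 + 1 - 2 = n)%N; last by lia.
rewrite (_ : n.+1 - 1 = n)%N; last by lia.
rewrite (_ : 2 * n.+1 - 1 - 1 = n.*2)%N; last by lia.
rewrite (_ : 3 * n.+1 - 2 = (3 * n).+1)%N; last by lia.
rewrite binn mul1n !natr_bin; [|lia|lia].
rewrite (_ : n.*2 - n = n)%N; last by lia.
rewrite (_ : (3 * n).+1 - n = n.*2.+1)%N; last by lia.
by field; rewrite !natr_fact_neq0.
Qed.

Lemma Hcoef1_ratio n :
  Hcoef n.+1 1 / Hcoef n.+2 1 =
  3 * (3 * n%:R + 4) * (3 * n%:R + 2) / (4 * (2 * n%:R + 3) * (2 * n%:R + 1)).
Proof.
rewrite !Hcoef1E doubleS mulnS !addSn add0n !factS !natrM.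
rewrite -!mul2n; field.
have n_ge0 : 0 <= n%:R :> rat := ler0n _ n.
by rewrite !natr_fact_neq0 /=; repeat (apply/andP; split); apply: lt0r_neq0; lra.
Qed.

Lemma Hcoef1_neq0 N : (0 < N)%N -> Hcoef N 1 != 0.
Proof.
case: N => // n _.
by rewrite Hcoef1E !(mulf_neq0, invr_neq0) ?natr_fact_neq0.
Qed.

Lemma Hcoef_succ N r : (1 < N)%N -> (0 < r <= N)%N ->
  Hcoef N r.+1 = (N%:R + r%:R - 1) * (N%:R - r%:R)
                 / (r%:R * (2 * N%:R - 1 - r%:R)) * Hcoef N r.
Proof.
move=> N_gt1 /andP[r_gt0 le_rN].
have := @Hcoef_rec N r (ltnW N_gt1) r_gt0.
rewrite !natrM !natrB ?natrM ?natrD; try lia.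
have r_neq0 : r%:R != 0 :> rat by rewrite pnatr_eq0 -lt0n.
have gap_neq0 : 2 * N%:R - 1 - r%:R != 0 :> rat.
  have : r%:R <= N%:R :> rat by rewrite ler_nat.
  have : 1 < N%:R :> rat by rewrite ltr1n.
  by move=> *; apply: lt0r_neq0; lra.
move=> rec; apply: (mulfI (mulf_neq0 r_neq0 gap_neq0)); rewrite rec.
by field; rewrite gap_neq0 r_neq0.
Qed.

Lemma horner0_derivn (R : nzSemiRingType) (p : {poly R}) n :
  p^`(n).[0] = p`_n *+ n`!.
Proof. by rewrite horner_coef0 coef_derivn addn0 ffactnn. Qed.

(* At [k = N] both sides vanish, through the factor [N - r] of the recurrence. *)
Lemma coef_hpoly N k : (1 < N)%N -> (k <= N)%N -> (hpoly N)`_k = Hcoef N k.+1.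
Proof.
move=> N_gt1; rewrite leq_eqVlt coef_poly => /orP[/eqP-> | ->] //.
rewrite ltnn Hcoef_succ //; last by rewrite leqnn andbT ltnW.
by rewrite subrr mulr0 !mul0r.
Qed.

Lemma hpoly_deriv_ratio N : (1 < N)%N ->
  (hpoly N)^`().[0] / (hpoly N).[0] = N%:R / 2.
Proof.
move=> N_gt1; rewrite -derivn1 -[(hpoly N).[0]]/((hpoly N)^`(0)).[0].
rewrite !horner0_derivn !coef_hpoly ?(ltnW N_gt1) // !mulr1n.
rewrite Hcoef_succ //; last by rewrite /= (ltnW N_gt1).
have H1_neq0 : Hcoef N 1 != 0 by rewrite Hcoef1_neq0 // ltnW.
have N_gt : 1 < N%:R :> rat by rewrite ltr1n.
by field; rewrite H1_neq0 /=; apply: lt0r_neq0; lra.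
Qed.

Lemma hpoly_deriv3_ratio N : (2 < N)%N ->
  (hpoly N)^`(3).[0] / (hpoly N).[0] =
  N%:R * (N%:R + 1) * (N%:R + 2) * (N%:R - 3) / (4 * (2 * N%:R - 3)).
Proof.
move=> N_gt2; have N_gt1 := ltnW N_gt2.
rewrite -[(hpoly N).[0]]/((hpoly N)^`(0)).[0].
rewrite !horner0_derivn !coef_hpoly ?(ltnW N_gt1) // mulr1n.
rewrite [Hcoef N 4]Hcoef_succ ?[Hcoef N 3]Hcoef_succ ?[Hcoef N 2]Hcoef_succ //=;
  last by rewrite ltnW.
have H1_neq0 : Hcoef N 1 != 0 by rewrite Hcoef1_neq0 // ltnW.
have N_gt : 2 < N%:R :> rat by rewrite ltr_nat.
rewrite (_ : 3`! = 6)%N //.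
by field; rewrite H1_neq0 /=; repeat (apply/andP; split); apply: lt0r_neq0; lra.
Qed.

Lemma hpoly_horner0_ratio N : (1 < N)%N ->
  (hpoly N.-1).[0] / (hpoly N).[0] =
  3 * (3 * N%:R - 2) * (3 * N%:R - 4) / (4 * (2 * N%:R - 1) * (2 * N%:R - 3)).
Proof.
case: N => [|[|n]] // _; rewrite !horner_coef0 !coef_poly /= Hcoef1_ratio.
by rewrite -[n.+2]addn2 natrD; congr (_ * _^-1); ring.
Qed.

Theorem mainTheorem8 (N : nat) (hN : (4 <= N)%N) :
  (hpoly N)^`(3).[0] / (hpoly N).[0]
  - (hpoly N.-1)^`(3).[0] / (hpoly N.-1).[0]
  - 3%:R / 2%:R * ((hpoly N)^`().[0] / (hpoly N).[0]) ^+ 2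
  - 21%:R / 2%:R * ((hpoly N.-2).[0] / (hpoly N.-1).[0] - 7%:R / 4%:R) = 0.
Proof.
rewrite !hpoly_deriv3_ratio; [|lia..].
rewrite hpoly_deriv_ratio; last lia.
rewrite hpoly_horner0_ratio; last lia.
have -> : N.-1%:R = N%:R - 1 :> rat by rewrite -subn1 natrB //; lia.
have N_ge : 4 <= N%:R :> rat by rewrite ler_nat.
by field; apply/andP; split; apply: lt0r_neq0; lra.
Qed.
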